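(* Let $x\in\mathbb R^d$ and $q\in\mathcal C$ be such that the segment $\overline{xq}$ does not intersect the medial axis $\mathcal M$, and let $p=\mathrm{cl}(x)$. Then $p$ and $q$ lie in the same connected component of $\mathcal C$, and for a fixed orientation of that component, the interior of $B_x(d(x,q))$ contains either $[p,q)$ or $(q,p]$.
   Context: $\mathcal C\subset\mathbb R^d$ ($d\ge2$) is a finite union of pairwise disjoint closed curves (images of injective continuous maps $S^1\to\mathbb R^d$). $d(x,y)$ is Euclidean distance, $B_x(r)$ the closed ball of radius $r$ about $x$, $\overline{xy}$ the closed segment. The medial axis $\mathcal M$ is the set of points with no unique closest point in $\mathcal C$; $\mathrm{cl}(x)$ is the unique closest point of $\mathcal C$ to $x\notin\mathcal M$. For $p,q$ in the same component with a fixed orientation, $[p,q]$ is $\{p\}$ if $p=q$ and otherwise the arc of $\mathcal C$ from $p$ to $q$ traversed following the orientation; $[p,q)$, $(q,p]$ etc. denote the corresponding arcs with the indicated endpoints removed. *)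

From HB Require Import structures.
From mathcomp Require Import all_boot all_order all_algebra.
From mathcomp Require Import classical_sets reals topology normedtype.
Set Implicit Arguments. Unset Strict Implicit. Unset Printing Implicit Defensive.
Import Order.TTheory GRing.Theory Num.Theory.
Import numFieldNormedType.Exports.
Local Open Scope ring_scope.
Local Open Scope classical_set_scope.

Section Defs.
Variables (R : realType) (d : nat).
Notation pt := 'rV[R]_d.

Definition euclid_dist (x y : pt) : R :=
  Num.sqrt (\sum_(i < d) (x ord0 i - y ord0 i) ^+ 2).

Definition ball_int (x : pt) (r : R) : set pt := [set y | euclid_dist x y < r].

Definition cseg (x y : pt) : set pt :=
  [set z | exists t : R, 0 <= t <= 1 /\ z = (1 - t) *: x + t *: y].

(* A closed curve (injective continuous image of S^1), given by a
   1-periodic continuous parametrization injective on [0,1).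
   The orientation of the curve is that of increasing parameter. *)
Definition closed_curve (g : R -> pt) : Prop :=
  continuous g /\ (forall t, g (t + 1) = g t) /\
  (forall s t, 0 <= s < 1 -> 0 <= t < 1 -> g s = g t -> s = t).

Definition curve_img (g : R -> pt) : set pt := [set y | exists t, y = g t].

Definition curves_union (n : nat) (g : 'I_n -> R -> pt) : set pt :=
  [set y | exists i, curve_img (g i) y].

Definition closest (C : set pt) (x p : pt) : Prop :=
  C p /\ forall y, C y -> euclid_dist x p <= euclid_dist x y.

Definition medial_axis (C : set pt) : set pt :=
  [set x | ~ (exists! p, closest C x p)].

(* end parameter of the oriented arc from parameter s to parameter t
   (both in [0,1)) *)
Definition arc_end (s t : R) : R := if s <= t then t else t + 1.

(* [p, q) : arc from p to q following the orientation of g, q removed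
   (empty when p = q). *)
Definition arc_co (g : R -> pt) (p q : pt) : set pt :=
  [set y | exists s t u, [/\ 0 <= s < 1, 0 <= t < 1, g s = p /\ g t = q,
     s <= u < arc_end s t & y = g u]].

(* (q, p] : arc from q to p following the orientation of g, q removed
   (empty when p = q). *)
Definition arc_oc (g : R -> pt) (q p : pt) : set pt :=
  [set y | exists t s u, [/\ 0 <= t < 1, 0 <= s < 1, g t = q /\ g s = p,
     t < u <= arc_end t s & y = g u]].

End Defs.

(* Let cl(t) be the closest point of C to y_t = (1 - t) x + t q.  Since the
   segment avoids the medial axis, cl(t) is unique, hence continuous in t, with
   cl(0) = p and cl(1) = q; moreover d(y_t, cl t) < d(y_t, q) forces cl(t) into
   the open ball B of radius d(x, q) about x unless cl(t) = q.  Starting at p,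
   follow the curve of p forwards and backwards until it first leaves B, and let
   W be the union of the two arcs obtained.  W is open in C (the other curves
   are at positive distance) and its closure adds only the two exit points.
   If neither exit point were q, a continuity argument would keep cl(t) in W
   for every t, so q = cl(1) would lie in B: absurd.  Hence one of the two arcs
   runs from p to q inside B. *)

From HB Require Import structures.
From mathcomp Require Import all_boot all_order all_algebra.
From mathcomp Require Import boolp classical_sets reals topology normedtype.
From mathcomp Require Import realfun derive ring lra zify.
Import Order.TTheory GRing.Theory Num.Theory.
Import numFieldNormedType.Exports.
Set Implicit Arguments. Unset Strict Implicit. Unset Printing Implicit Defensive.
Local Open Scope ring_scope.
Local Open Scope classical_set_scope.

Lemma cauchy_schwarz_sum (R : realDomainType) (I : finType) (a b : I -> R) :
  (\sum_i a i * b i) ^+ 2 <= (\sum_i a i ^+ 2) * (\sum_i b i ^+ 2).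
Proof.
set A := \sum_i a i ^+ 2; set B := \sum_i b i ^+ 2; set S := \sum_i a i * b i.
have B0 : 0 <= B by apply: sumr_ge0 => i _; exact: sqr_ge0.
have [B_eq0|B_neq0] := eqVneq B 0.
  have b0 i : b i = 0.
    apply/eqP; rewrite -sqrf_eq0; apply/eqP.
    move/eqP: B_eq0; rewrite psumr_eq0 => [/allP H|j _]; last exact: sqr_ge0.
    by apply/eqP; apply: H; rewrite mem_index_enum.
  have -> : S = 0 by rewrite /S big1 // => i _; rewrite b0 mulr0.
  by rewrite B_eq0 expr0n /= mulr0.
have E : \sum_i (B * a i - S * b i) ^+ 2 = B * (A * B - S ^+ 2).
  rewrite (eq_bigr (fun i => B ^+ 2 * a i ^+ 2 - (2 * B * S) * (a i * b i)
                             + S ^+ 2 * b i ^+ 2)); last first.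
    by move=> i _; rewrite sqrrB !exprMn; ring.
  by rewrite big_split /= sumrB -!mulr_sumr -/A -/B -/S; ring.
have : 0 <= B * (A * B - S ^+ 2) by rewrite -E; apply: sumr_ge0 => i _; exact: sqr_ge0.
by rewrite pmulr_rge0 ?subr_ge0 // lt_def B_neq0.
Qed.

Section EuclidDist.
Variables (R : realType) (d : nat).
Notation pt := 'rV[R]_d.
Local Notation dist := (@euclid_dist R d).

Lemma euclid_dist_ge0 (x y : pt) : 0 <= dist x y.
Proof. exact: sqrtr_ge0. Qed.

Lemma euclid_distC (x y : pt) : dist x y = dist y x.
Proof.
by rewrite /euclid_dist; congr Num.sqrt; apply: eq_bigr => i _; rewrite -sqrrN opprB.
Qed.

Lemma euclid_distxx (x : pt) : dist x x = 0.
Proof. by rewrite /euclid_dist big1 ?sqrtr0 // => i _; rewrite subrr expr0n. Qed.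

Lemma euclid_dist_eq0 (x y : pt) : dist x y = 0 -> x = y.
Proof.
rewrite /euclid_dist => /eqP; rewrite sqrtr_eq0 => le0.
have /eqP : \sum_(i < d) (x ord0 i - y ord0 i) ^+ 2 = 0.
  by apply/eqP; rewrite eq_le le0 /=; apply: sumr_ge0 => i _; exact: sqr_ge0.
rewrite psumr_eq0 => [/allP sq0|i _]; last exact: sqr_ge0.
apply/rowP => i; apply/eqP; rewrite -subr_eq0 -sqrf_eq0.
by apply: sq0; rewrite mem_index_enum.
Qed.

Lemma euclid_dist_gt0 (x y : pt) : x <> y -> 0 < dist x y.
Proof.
by move=> xy; rewrite lt_def euclid_dist_ge0 andbT; apply/eqP => /euclid_dist_eq0.
Qed.

Lemma euclid_dist_triangle (x y z : pt) : dist x z <= dist x y + dist y z.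
Proof.
rewrite /euclid_dist.
set a := fun i => x ord0 i - y ord0 i; set b := fun i => y ord0 i - z ord0 i.
have -> : \sum_(i < d) (x ord0 i - z ord0 i) ^+ 2 = \sum_i (a i + b i) ^+ 2.
  by apply: eq_bigr => i _; rewrite /a /b addrA subrK.
rewrite -/(\sum_i a i ^+ 2) -/(\sum_i b i ^+ 2).
set A := \sum_i a i ^+ 2; set B := \sum_i b i ^+ 2; set S := \sum_i a i * b i.
have A0 : 0 <= A by apply: sumr_ge0 => i _; exact: sqr_ge0.
have B0 : 0 <= B by apply: sumr_ge0 => i _; exact: sqr_ge0.
have -> : \sum_i (a i + b i) ^+ 2 = A + 2 * S + B.
  rewrite (eq_bigr (fun i => a i ^+ 2 + 2 * (a i * b i) + b i ^+ 2)); last first.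
    by move=> i _; rewrite sqrrD; ring.
  by rewrite !big_split /= -mulr_sumr.
have SAB : S <= Num.sqrt A * Num.sqrt B.
  have [S_le0|S_gt0] := lerP S 0.
    by apply: le_trans S_le0 _; apply: mulr_ge0; exact: sqrtr_ge0.
  rewrite -sqrtrM // -(ger0_norm (ltW S_gt0)) -sqrtr_sqr.
  by rewrite ler_sqrt ?cauchy_schwarz_sum // mulr_ge0.
have sum_ge0 : 0 <= Num.sqrt A + Num.sqrt B by rewrite addr_ge0 // sqrtr_ge0.
rewrite -(ger0_norm sum_ge0) -sqrtr_sqr ler_sqrt ?sqr_ge0 //.
by rewrite sqrrD !sqr_sqrtr //; lra.
Qed.

Lemma euclid_dist_scale (x y v w : pt) (c : R) :
  (forall i, x ord0 i - y ord0 i = c * (v ord0 i - w ord0 i)) ->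
  dist x y = `|c| * dist v w.
Proof.
move=> xy; rewrite /euclid_dist.
rewrite (eq_bigr (fun i => c ^+ 2 * (v ord0 i - w ord0 i) ^+ 2)); last first.
  by move=> i _; rewrite xy exprMn.
by rewrite -mulr_sumr sqrtrM ?sqr_ge0 // sqrtr_sqr.
Qed.

Lemma continuous_euclid_dist (T : topologicalType) (z : pt) (h : T -> pt) :
  continuous h -> continuous (fun u => dist z (h u)).
Proof.
move=> hc; rewrite /euclid_dist => u.
apply: continuous_comp; last exact: sqrt_continuous.
apply: (@continuous_big R^o _ +%R 0 xpredT add_continuous) => i _ {}u.
apply: (continuous_comp (f := fun v => z ord0 i - h v ord0 i) (g := fun r => r ^+ 2));
  last exact: exprn_continuous.
apply: (continuousB (f := fun=> z ord0 i)); first exact: cvg_cst.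
exact: (continuous_comp (hc u) (@coord_continuous _ _ _ ord0 i (h u))).
Qed.

Lemma continuous_euclid_distr (z : pt) : continuous (dist z).
Proof. exact: (@continuous_euclid_dist _ z id (fun=> cvg_id)). Qed.

End EuclidDist.

Arguments continuous_euclid_dist {R d T} z {h}.
Arguments continuous_euclid_distr {R d} z.

Section RealInterval.
Variable R : realType.

Lemma real_induction01 (P : R -> Prop) : P 0 ->
  (forall t, 0 <= t <= 1 -> P t -> exists2 eta, 0 < eta &
     forall t', 0 <= t' <= 1 -> `|t - t'| < eta -> P t') ->
  (forall t, 0 < t <= 1 -> (forall t', 0 <= t' < t -> P t') -> P t) -> P 1.
Proof.
move=> P0 P_open P_left_closed.
pose A := [set u : R | 0 <= u <= 1 /\ forall v, 0 <= v <= u -> P v].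
have A0 : A 0.
  split; first by rewrite lexx ler01.
  by move=> v v0; have -> : v = 0 by apply/eqP; rewrite eq_le andbC.
have A_le1 u : A u -> u <= 1 by case=> /andP[].
have supA : has_sup A by split; [exists 0 | exists 1 => u /A_le1].
have A_le_sup u : A u -> u <= sup A by move=> Au; exact: sup_upper_bound.
have P_below v : 0 <= v < sup A -> P v.
  case/andP=> v0 v_lt; have e0 : 0 < sup A - v by rewrite subr_gt0.
  have [e [_ Ae] ve] := sup_adherent e0 supA.
  by apply: Ae; rewrite v0 /=; lra.
have sup_le1 : sup A <= 1 by apply: ge_sup; [exists 0 | move=> u /A_le1].
have sup_ge0 : 0 <= sup A by exact: A_le_sup.
have P_sup : P (sup A).
  have [sup_le0|sup_gt0] := lerP (sup A) 0.
    by have -> : sup A = 0 by apply/eqP; rewrite eq_le sup_le0 sup_ge0.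
  by apply: P_left_closed => //; rewrite sup_gt0 sup_le1.
have [sup_ge1|sup_lt1] := lerP 1 (sup A).
  by have <- : sup A = 1 by apply/eqP; rewrite eq_le sup_le1 sup_ge1.
have [eta eta0 P_near] := P_open (sup A) (introT andP (conj sup_ge0 sup_le1)) P_sup.
have A_above m : sup A < m <= Num.min 1 (sup A + eta / 2) -> A m.
  rewrite le_min => /andP[m_gt /andP[m_le1 m_le]]; split; first by apply/andP; lra.
  move=> v /andP[v0 vm]; have [v_lt|v_ge] := ltP v (sup A).
    by apply: P_below; rewrite v0.
  by apply: P_near; [apply/andP; lra | rewrite ler0_norm; lra].
have : A (Num.min 1 (sup A + eta / 2)).
  by apply: A_above; rewrite lexx andbT lt_min sup_lt1 /=; lra.
by move/A_le_sup; rewrite ge_min; lra.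
Qed.

Lemma first_exit (F : R -> R) (D : R) : continuous F -> F 0 < D ->
  exists a, [/\ 0 < a <= 1, (forall v, 0 <= v < a -> F v < D) & (a < 1 -> D <= F a)].
Proof.
move=> Fc F0; apply: contrapT => no_exit.
suff P1 : forall v, 0 <= v <= 1 -> F v < D.
  apply: no_exit; exists 1; split; rewrite ?ltr01 ?lexx ?ltxx //.
  by move=> v /andP[v0 v1]; apply: P1; rewrite v0 ltW.
apply: (real_induction01 (P := fun t => forall v, 0 <= v <= t -> F v < D)).
- by move=> v v0; have -> : v = 0 by apply/eqP; rewrite eq_le andbC.
- move=> t /andP[t0 _] Pt.
  have Ft : F t < D by apply: Pt; rewrite t0 lexx.
  have /cvgrPdist_lt/(_ (D - F t)) := Fc t.
  rewrite subr_gt0 => /(_ Ft) /nbhs_ballP [eta eta0 near_t].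
  exists eta => // t' _ tt' v /andP[v0 vt'].
  have [v_le|v_gt] := leP v t; first by apply: Pt; rewrite v0.
  have : `|F t - F v| < D - F t.
    apply: near_t; rewrite /ball /= ltr0_norm ?subr_lt0 //.
    by move: tt'; rewrite ltr_norml; lra.
  by rewrite ltr_norml; lra.
- move=> t /andP[t0 t1] P_before v /andP[v0 vt].
  have F_before u : 0 <= u < t -> F u < D.
    by move=> ut; apply: (P_before u ut); rewrite (andP ut).1 lexx.
  have [v_lt|v_ge] := ltP v t; first by apply: F_before; rewrite v0.
  have -> : v = t by apply/eqP; rewrite eq_le vt.
  have [//|Ft] := ltP (F t) D.
  by exfalso; apply: no_exit; exists t; split; rewrite ?t0.
Qed.

Lemma last_entry (F : R -> R) (D : R) : continuous F -> F 1 < D ->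
  exists b, [/\ 0 < b <= 1, (forall v, 0 <= v < b -> F (1 - v) < D)
                           & (b < 1 -> D <= F (1 - b))].
Proof.
move=> Fc F1; apply: (first_exit (F := fun v => F (1 - v))); last by rewrite subr0.
move=> u; apply: (continuous_comp (f := fun u : R => 1 - u) (g := F)); last exact: Fc.
exact: (continuousB (f := fun=> (1 : R)) (g := id) (x := u) (cvg_cst _) cvg_id).
Qed.

Lemma continuous_pos_lbound (F : R -> R) (l r : R) : continuous F ->
  (forall u, l <= u <= r -> 0 < F u) ->
  exists2 m, 0 < m & forall u, l <= u <= r -> m <= F u.
Proof.
move=> Fc F_gt0; have [lr|rl] := lerP l r; last first.
  by exists 1 => // u /andP[lu ur]; lra.
have [c cin c_min] := EVT_min lr (continuous_subspaceT (A := `[l, r]) Fc).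
move: cin; rewrite in_itv /= => cin.
by exists (F c) => [|u ulr]; [exact: F_gt0 | apply: c_min; rewrite in_itv].
Qed.

Lemma finite_pos_witness (I : finType) (P : I -> R -> Prop) :
  (forall j, exists2 e, 0 < e & P j e) ->
  (forall j e e', 0 < e' -> e' <= e -> P j e -> P j e') ->
  exists2 e, 0 < e & forall j, P j e.
Proof.
move=> P_ex P_down.
suff [e e0 Pe] : exists2 e, 0 < e & forall j, j \in enum I -> P j e.
  by exists e => // j; apply: Pe; rewrite mem_enum.
elim: (enum I) => [|a s [e e0 Pe]]; first by exists 1.
have [ea ea0 Pa] := P_ex a.
exists (Num.min ea e); first by rewrite lt_min ea0.
move=> j; rewrite inE => /orP[/eqP->|js].
  by apply: (P_down _ ea); rewrite ?lt_min ?ea0 ?ge_min ?lexx.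
by apply: (P_down _ e); rewrite ?lt_min ?ea0 ?ge_min ?lexx ?orbT //; apply: Pe.
Qed.

End RealInterval.

Section ClosedCurve.
Variables (R : realType) (d : nat) (g : R -> 'rV[R]_d).
Hypothesis gc : closed_curve g.

Lemma closed_curve_cont : continuous g.
Proof. by case: gc. Qed.

Lemma closed_curve_periodic t : g (t + 1) = g t.
Proof. by case: gc => _ []. Qed.

Lemma closed_curve_periodicz t (k : int) : g (t + k%:~R) = g t.
Proof.
have g_addn s m : g (s + m%:R) = g s.
  by elim: m => [|m IH]; rewrite ?addr0 // -natr1 addrA closed_curve_periodic.
case: k => m; first exact: g_addn.
by rewrite NegzE intrN -[in RHS](subrK m.+1%:R t) g_addn.
Qed.

Lemma closed_curve_rep t :
  exists s, [/\ 0 <= s < 1, g s = g t & exists k : int, t = s + k%:~R].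
Proof.
exists (t - (Num.floor t)%:~R); split; last by exists (Num.floor t); rewrite subrK.
  by have := Num.Theory.floor_le t; have := Num.Theory.floorD1_gt t; rewrite intrD; lra.
by rewrite -(closed_curve_periodicz _ (Num.floor t)) subrK.
Qed.

Lemma closed_curve_inj_near s t : g s = g t -> `|s - t| < 1 -> s = t.
Proof.
have [s' [s'01 <- [ks ->]]] := closed_curve_rep s.
have [t' [t'01 <- [kt ->]]] := closed_curve_rep t.
move=> gst; have <- : s' = t' by case: gc => _ [_]; apply.
have -> : s' + ks%:~R - (s' + kt%:~R) = (ks - kt)%:~R by rewrite intrB; ring.
by rewrite -intr_norm -[1]/(1%:~R) ltr_int => ?; have -> : ks = kt by lia.
Qed.

Lemma closed_curve_shift s0 : closed_curve (fun u => g (s0 + u)).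
Proof.
split; last split.
- move=> u; apply: continuous_comp; last exact: closed_curve_cont.
  exact: (continuousD (f := fun=> s0) (g := id) (cvg_cst _) cvg_id).
- by move=> t; rewrite addrA closed_curve_periodic.
- move=> s t /andP[s_ge0 s_lt1] /andP[t_ge0 t_lt1] /closed_curve_inj_near st.
  by apply: (addrI s0); apply: st; rewrite ltr_norml; apply/andP; lra.
Qed.

Lemma closed_curve_pos_lbound (F : 'rV[R]_d -> R) : continuous F ->
  (forall t, 0 < F (g t)) -> exists2 m, 0 < m & forall t, m <= F (g t).
Proof.
move=> Fc F_gt0.
have [|m m0 m_le] := @continuous_pos_lbound _ (F \o g) 0 1 _ (fun u _ => F_gt0 u).
  by move=> u; apply: continuous_comp; [exact: closed_curve_cont | exact: Fc].
exists m => // t; have [s [/andP[s0 s1] <- _]] := closed_curve_rep t.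
by apply: m_le; rewrite s0 ltW.
Qed.

Lemma arc_co_sub (B : set 'rV[R]_d) s0 a p q : 0 <= s0 < 1 -> 0 < a < 1 ->
  g s0 = p -> g (s0 + a) = q ->
  (forall v, 0 <= v < a -> B (g (s0 + v))) -> arc_co g p q `<=` B.
Proof.
move=> s0_01 a01 <- <- B_arc y [s [t [u [s01 t01 [gs gt] u_arc ->]]]].
have ss : s = s0 by apply: closed_curve_inj_near; rewrite // ltr_norml; apply/andP; lra.
subst s.
have B_u : s0 <= u < s0 + a -> B (g u).
  by move=> ua; have := B_arc (u - s0); rewrite (addrC s0) subrK; apply; apply/andP; lra.
have [no_wrap|wrap] := ltP (s0 + a) 1.
  have tt : t = s0 + a.
    by apply: closed_curve_inj_near; rewrite // ltr_norml; apply/andP; lra.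
  by apply: B_u; move: u_arc; rewrite tt /arc_end ifT //; lra.
have tt : t = s0 + a - 1.
  apply: closed_curve_inj_near; last by rewrite ltr_norml; apply/andP; lra.
  by rewrite gt -[in RHS]closed_curve_periodic subrK.
apply: B_u; move: u_arc; rewrite tt /arc_end ifF ?subrK //.
by apply/negbTE; rewrite -ltNge; lra.
Qed.

Lemma arc_oc_sub (B : set 'rV[R]_d) s0 c q p : 0 <= s0 < 1 -> 0 < c < 1 ->
  g (s0 + c) = q -> g s0 = p ->
  (forall v, c < v <= 1 -> B (g (s0 + v))) -> arc_oc g q p `<=` B.
Proof.
move=> s0_01 c01 <- <- B_arc y [t [s [u [t01 s01 [gt gs] u_arc ->]]]].
have ss : s = s0 by apply: closed_curve_inj_near; rewrite // ltr_norml; apply/andP; lra.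
subst s.
have B_u v : s0 + c < v <= s0 + 1 -> B (g v).
  by move=> cv; have := B_arc (v - s0); rewrite (addrC s0) subrK; apply; apply/andP; lra.
have [no_wrap|wrap] := ltP (s0 + c) 1.
  have tt : t = s0 + c.
    by apply: closed_curve_inj_near; rewrite // ltr_norml; apply/andP; lra.
  apply: B_u; move: u_arc; rewrite tt /arc_end ifF //.
  by apply/negbTE; rewrite -ltNge; lra.
have tt : t = s0 + c - 1.
  apply: closed_curve_inj_near; last by rewrite ltr_norml; apply/andP; lra.
  by rewrite gt -[in RHS]closed_curve_periodic subrK.
rewrite -closed_curve_periodic; apply: B_u.
by move: u_arc; rewrite tt /arc_end ifT; lra.
Qed.

Lemma arc_co_self p : arc_co g p p = set0.
Proof.
apply/seteqP; split => // y [s [t [u [s01 t01 [gs gt] /andP[su ue] _]]]].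
have st : s = t by case: gc => _ [_]; apply; rewrite // gs gt.
by move: ue; rewrite -st /arc_end lexx; lra.
Qed.

End ClosedCurve.

Section CurveFamily.
Variables (R : realType) (d n : nat) (g : 'I_n -> R -> 'rV[R]_d).
Hypothesis gc : forall i, closed_curve (g i).
Local Notation C := (curves_union g).
Local Notation dist := (@euclid_dist R d).

Lemma other_curves_far i0 s0 : (forall i j, i != j -> forall s t, g i s <> g j t) ->
  exists2 r, 0 < r & forall j, j != i0 -> forall t, r <= dist (g i0 s0) (g j t).
Proof.
move=> g_disj.
apply: (finite_pos_witness
  (P := fun j r => j != i0 -> forall t, r <= dist (g i0 s0) (g j t))); last first.
  by move=> j e e' _ e'e P_e ji t; apply: le_trans e'e (P_e ji t).
move=> j; have [->|ji] := eqVneq j i0; first by exists 1 => //; rewrite eqxx.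
have [|r r0 r_le] := closed_curve_pos_lbound (gc j) (continuous_euclid_distr (g i0 s0)).
  by move=> t; apply: euclid_dist_gt0; apply: g_disj; rewrite eq_sym.
by exists r.
Qed.

Lemma unique_closest_margin (y c : 'rV[R]_d) e :
  closest C y c -> (forall c', closest C y c' -> c' = c) -> 0 < e ->
  exists2 m, 0 < m & forall c', C c' -> e <= dist c c' -> dist y c + m <= dist y c'.
Proof.
move=> [cC c_min] c_uniq e0; set del := dist y c.
have [m m0 m_le] : exists2 m, 0 < m & forall j t,
    e <= dist c (g j t) -> del + m <= dist y (g j t); last first.
  by exists m => // _ [j [t ->]]; exact: m_le.
apply: (finite_pos_witness (P := fun j m => forall t,
    e <= dist c (g j t) -> del + m <= dist y (g j t))); last first.
  by move=> j m m' _ m'm P_m t /P_m; apply: le_trans; rewrite lerD2l.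
move=> j.
(* [F] is positive on the curve: near [c] through its second summand, elsewhere
   because [c] is the unique closest point. *)
pose F y' := dist y y' - del + Num.max 0 (e - dist c y').
have Fc : continuous F.
  move=> y'; have d_y := continuous_euclid_distr y; have d_c := continuous_euclid_distr c.
  apply: (continuousD (f := fun y' => dist y y' - del)
                      (g := fun y' => Num.max 0 (e - dist c y'))).
    by apply: continuousB; [exact: d_y | exact: cst_continuous].
  apply: (continuous_max (f := fun=> 0)); first exact: cst_continuous.
  by apply: continuousB; [exact: cst_continuous | exact: d_c].
have [|m m0 m_le] := closed_curve_pos_lbound (gc j) Fc.
  move=> t; have del_le : del <= dist y (g j t) by apply: c_min; exists j, t.
  have max_ge0 : 0 <= Num.max 0 (e - dist c (g j t)) by rewrite le_max lexx.
  have [near|far] := ltP (dist c (g j t)) e.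
    have : 0 < Num.max 0 (e - dist c (g j t)) by rewrite lt_max subr_gt0 near orbT.
    by rewrite /F; lra.
  suff : del < dist y (g j t) by rewrite /F; lra.
  rewrite lt_def del_le andbT; apply/eqP => del_eq.
  have gc_eq : g j t = c.
    by apply: c_uniq; split; [exists j, t | move=> y' /c_min; rewrite del_eq].
  by move: far; rewrite gc_eq euclid_distxx; lra.
exists m => // t far; have := m_le t.
by rewrite /F (_ : Num.max _ _ = 0); [lra | apply/max_idPl; lra].
Qed.

End CurveFamily.

Section SegmentClosest.
Variables (R : realType) (d n : nat) (g : 'I_n -> R -> 'rV[R]_d) (x q : 'rV[R]_d).
Hypothesis gc : forall i, closed_curve (g i).
Hypothesis qC : curves_union g q.
Hypothesis seg_off_medial : forall y, cseg x q y -> ~ medial_axis (curves_union g) y.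
Local Notation C := (curves_union g).
Local Notation dist := (@euclid_dist R d).
Local Notation D := (dist x q).

Definition seg_pt (t : R) : 'rV[R]_d := (1 - t) *: x + t *: q.

Definition seg_cl (t : R) : 'rV[R]_d := xget 0 (closest C (seg_pt t)).

Lemma seg_pt_distl t : dist x (seg_pt t) = `|t| * D.
Proof. by apply: euclid_dist_scale => i; rewrite !mxE; ring. Qed.

Lemma seg_pt_distr t : dist (seg_pt t) q = `|1 - t| * D.
Proof. by apply: euclid_dist_scale => i; rewrite !mxE; ring. Qed.

Lemma seg_pt_dist t t' : dist (seg_pt t) (seg_pt t') = `|t' - t| * D.
Proof. by apply: euclid_dist_scale => i; rewrite !mxE; ring. Qed.

Lemma seg_pt0 : seg_pt 0 = x.
Proof. by rewrite /seg_pt subr0 scale1r scale0r addr0. Qed.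

Lemma seg_pt1 : seg_pt 1 = q.
Proof. by rewrite /seg_pt subrr scale0r scale1r add0r. Qed.

Lemma seg_pt_uniq_closest t : 0 <= t <= 1 -> exists! c, closest C (seg_pt t) c.
Proof. by move=> t01; apply: contrapT; apply: seg_off_medial; exists t. Qed.

Lemma seg_cl_closest t : 0 <= t <= 1 -> closest C (seg_pt t) (seg_cl t).
Proof. by move=> /seg_pt_uniq_closest [c [cc _]]; apply: xgetPex; exists c. Qed.

Lemma seg_cl_unique t c : 0 <= t <= 1 -> closest C (seg_pt t) c -> c = seg_cl t.
Proof.
move=> t01 cc; have [c' [_ c'_uniq]] := seg_pt_uniq_closest t01.
by rewrite -(c'_uniq c cc) (c'_uniq _ (seg_cl_closest t01)).
Qed.

Lemma seg_cl_in_C t : 0 <= t <= 1 -> C (seg_cl t).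
Proof. by move=> /seg_cl_closest []. Qed.

Lemma seg_cl0 p : closest C x p -> seg_cl 0 = p.
Proof. by move=> xp; apply/esym/seg_cl_unique; rewrite ?seg_pt0 // lexx ler01. Qed.

Lemma seg_cl1 : seg_cl 1 = q.
Proof.
apply/esym/seg_cl_unique; first by rewrite lexx ler01.
by rewrite seg_pt1; split => // y _; rewrite euclid_distxx euclid_dist_ge0.
Qed.

Lemma seg_cl_in_ball t : 0 <= t <= 1 -> seg_cl t <> q -> dist x (seg_cl t) < D.
Proof.
move=> t01 cl_neq_q; have [_ cl_min] := seg_cl_closest t01.
have cl_lt : dist (seg_pt t) (seg_cl t) < dist (seg_pt t) q.
  rewrite lt_def cl_min // andbT; apply/eqP => cl_eq; apply: cl_neq_q.
  apply/esym/seg_cl_unique => //; split => // y Cy; rewrite cl_eq; exact: cl_min.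
have := euclid_dist_triangle x (seg_pt t) (seg_cl t).
move: cl_lt; rewrite seg_pt_distl seg_pt_distr.
have := euclid_dist_ge0 x q; case/andP: t01 => t0 t1.
have t1' : 0 <= 1 - t by rewrite subr_ge0.
by rewrite !ger0_norm //; lra.
Qed.

Lemma closest_in_ball p : closest C x p -> p <> q -> dist x p < D.
Proof.
move=> xp; rewrite -(seg_cl0 xp) => p_neq_q.
by apply: seg_cl_in_ball; rewrite ?lexx ?ler01.
Qed.

Lemma seg_cl_continuous t : 0 <= t <= 1 -> forall e, 0 < e -> exists2 eta, 0 < eta &
  forall t', 0 <= t' <= 1 -> `|t - t'| < eta -> dist (seg_cl t) (seg_cl t') < e.
Proof.
move=> t01 e e0; set y := seg_pt t; set c := seg_cl t.
have [m m0 margin] := unique_closest_margin gc (seg_cl_closest t01)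
  (fun c' cc' => seg_cl_unique t01 cc') e0.
have D0 := euclid_dist_ge0 x q.
exists (m / (2 * (D + 1))); first by apply: divr_gt0 => //; lra.
move=> t' t'01 tt'; set y' := seg_pt t'; set c' := seg_cl t'.
(* [c'] is at most [2 dist y y' < m] farther from [y] than [c], so [margin]
   forbids [e <= dist c c']. *)
have yy' : dist y y' < m / 2.
  rewrite seg_pt_dist distrC.
  have : `|t - t'| * (D + 1) < m / 2.
    by move: tt'; rewrite ltr_pdivlMr ?mulr_gt0 //; lra.
  have : `|t - t'| * D <= `|t - t'| * (D + 1) by apply: ler_wpM2l => //; lra.
  lra.
have [c'C c'_min] := seg_cl_closest t'01.
rewrite ltNge; apply/negP => /(margin _ c'C).
move: (c'_min c (seg_cl_in_C t01)) (euclid_dist_triangle y' y c).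
move: (euclid_dist_triangle y y' c') yy'; rewrite (euclid_distC y' y).
move: (dist y c) (dist y c') (dist y' c) (dist y' c') (dist y y') => a b a' b' h.
clear tt'; lra.
Qed.

Lemma seg_cl_adherent (S : set 'rV[R]_d) t : 0 < t <= 1 ->
  (forall t', 0 <= t' < t -> S (seg_cl t')) ->
  forall r, 0 < r -> exists c, S c /\ dist (seg_cl t) c < r.
Proof.
move=> /andP[t0 t1] S_before r r0.
have [eta eta0 near_t] := seg_cl_continuous (introT andP (conj (ltW t0) t1)) r0.
have [t_near|t_far] := lerP 0 (t - eta / 2).
  exists (seg_cl (t - eta / 2)); split; first by apply: S_before; apply/andP; lra.
  by apply: near_t; [apply/andP; lra | rewrite ger0_norm; lra].
exists (seg_cl 0); split; first by apply: S_before; rewrite lexx.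
by apply: near_t; [rewrite lexx ler01 | rewrite subr0 ger0_norm; lra].
Qed.

End SegmentClosest.

Section Sweep.
Variables (R : realType) (d n : nat) (g : 'I_n -> R -> 'rV[R]_d) (x q : 'rV[R]_d).
Variables (i0 : 'I_n) (s0 a b : R).
Hypothesis gc : forall i, closed_curve (g i).
Hypothesis g_disj : forall i j, i != j -> forall s t, g i s <> g j t.
Local Notation C := (curves_union g).
Local Notation dist := (@euclid_dist R d).
Local Notation D := (dist x q).
Local Notation h u := (g i0 (s0 + u)).
Hypothesis a_range : 0 < a <= 1.
Hypothesis b_range : 0 < b <= 1.
Hypothesis before_a : forall v, 0 <= v < a -> dist x (h v) < D.
Hypothesis before_b : forall v, 0 <= v < b -> dist x (h (1 - v)) < D.
Hypothesis stop_a : a < 1 -> D <= dist x (h a).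
Hypothesis stop_b : b < 1 -> D <= dist x (h (1 - b)).
Hypothesis qC : C q.
Hypothesis seg_off_medial : forall y, cseg x q y -> ~ medial_axis C y.

Definition inner_arc (c : 'rV[R]_d) :=
  exists u, [/\ 0 <= u <= 1, u < a \/ 1 - b < u & c = h u].

Let hc : closed_curve (fun u => h u) := closed_curve_shift (gc i0) s0.

Lemma inner_arc_in_ball c : inner_arc c -> dist x c < D.
Proof.
move=> [u [/andP[u0 u1] [ua|ub] ->]]; first by apply: before_a; rewrite u0.
by rewrite -(subKr 1 u); apply: before_b; apply/andP; lra.
Qed.

Lemma inner_arc0 : inner_arc (h 0).
Proof. by exists 0; split; rewrite ?lexx ?ler01 //; left; case/andP: a_range. Qed.

Lemma inner_arc_open c : inner_arc c ->
  exists2 r, 0 < r & forall c', C c' -> dist c c' < r -> inner_arc c'.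
Proof.
move=> [w [/andP[w0 w1] w_out ->]].
case/andP: a_range => a0 a1; case/andP: b_range => b0 b1.
have middle_far v : a <= v <= 1 - b -> 0 < dist (h w) (h v).
  move=> /andP[av vb]; apply: euclid_dist_gt0 => hwv.
  have [w_lt1|w_ge1] := ltP w 1.
    have wv : w = v.
      by apply: (closed_curve_inj_near hc); rewrite // ltr_norml; apply/andP; lra.
    by case: w_out; lra.
  have v0 : 0 = v.
    apply: (closed_curve_inj_near hc); last by rewrite ltr_norml; apply/andP; lra.
    by rewrite -hwv (_ : w = 0 + 1) ?(closed_curve_periodic hc) //; lra.
  lra.
have [r0 r0_gt0 r0_le] :=
  continuous_pos_lbound (continuous_euclid_dist (h w) (closed_curve_cont hc))
    middle_far.
have [r1 r1_gt0 r1_le] := other_curves_far gc i0 (s0 + w) g_disj.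
exists (Num.min r0 r1); first by rewrite lt_min r0_gt0 r1_gt0.
move=> _ [j [t ->]]; rewrite lt_min => /andP[near0 near1].
have [j_eq|ji] := eqVneq j i0; last by have := r1_le j ji t; lra.
subst j.
have [v [/andP[v0 v1] hv _]] := closed_curve_rep hc (t - s0).
have hvt : g i0 t = h v by rewrite hv (addrC s0) subrK.
rewrite hvt in near0 *; exists v; split; [by rewrite v0 ltW | | by []].
have [va|va] := ltP v a; first by left.
have [vb|vb] := ltP (1 - b) v; first by right.
by exfalso; have /= := r0_le v (introT andP (conj va vb)); lra.
Qed.

Lemma inner_arc_closure c : (forall r, 0 < r -> exists c', inner_arc c' /\ dist c c' < r) ->
  [\/ inner_arc c, c = h a | c = h (1 - b)].
Proof.
move=> c_adh; have [|c_out] := pselect (inner_arc c); first exact: Or31.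
have [|c_neq_a] := eqVneq c (h a); first exact: Or32.
have [|c_neq_b] := eqVneq c (h (1 - b)); first exact: Or33.
exfalso; case/andP: a_range => a0 a1; case/andP: b_range => b0 b1.
have far_a u : 0 <= u <= a -> 0 < dist c (h u).
  move=> /andP[u0 ua]; apply: euclid_dist_gt0 => c_eq.
  have [ua'|ua'] := ltP u a.
    by apply: c_out; exists u; split => //; [apply/andP; lra | left].
  by move/eqP: c_neq_a; apply; rewrite c_eq (_ : u = a) //; lra.
have far_b u : 1 - b <= u <= 1 -> 0 < dist c (h u).
  move=> /andP[ub u1]; apply: euclid_dist_gt0 => c_eq.
  have [ub'|ub'] := ltP (1 - b) u.
    by apply: c_out; exists u; split => //; [apply/andP; lra | right].
  by move/eqP: c_neq_b; apply; rewrite c_eq (_ : u = 1 - b) //; lra.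
have h_cont := continuous_euclid_dist c (closed_curve_cont hc).
have [r1 r1_gt0 r1_le] := continuous_pos_lbound h_cont far_a.
have [r2 r2_gt0 r2_le] := continuous_pos_lbound h_cont far_b.
have m_gt0 : 0 < Num.min r1 r2 by rewrite lt_min r1_gt0 r2_gt0.
have [_ [[u [/andP[u0 u1] u_out ->]]]] := c_adh _ m_gt0.
rewrite lt_min => /andP[near1 near2]; case: u_out => [ua|ub].
  by have := r1_le u (introT andP (conj u0 (ltW ua))); lra.
by have := r2_le u (introT andP (conj (ltW ub) u1)); lra.
Qed.

Local Notation cl := (seg_cl g x q).

Lemma seg_cl_inner_arc_closed t :
  ~ (a < 1 /\ h a = q) -> ~ (b < 1 /\ h (1 - b) = q) -> 0 < t <= 1 ->
  (forall t', 0 <= t' < t -> inner_arc (cl t')) -> inner_arc (cl t).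
Proof.
move=> no_exit_a no_exit_b t01 before.
have t01' : 0 <= t <= 1 by case/andP: t01 => t0 t1; rewrite ltW.
have exit_is_q u : D <= dist x (h u) -> cl t = h u -> h u = q.
  move=> far cl_eq; apply: contrapT => neq.
  by have := seg_cl_in_ball qC seg_off_medial t01'; rewrite cl_eq => /(_ neq); lra.
case/andP: a_range => a0 a1; case/andP: b_range => b0 b1.
have := inner_arc_closure (seg_cl_adherent gc seg_off_medial t01 before).
case=> [//|cl_a|cl_b].
- have [a_lt1|a_ge1] := ltP a 1.
    by exfalso; apply: no_exit_a; split => //; exact: exit_is_q (stop_a a_lt1) cl_a.
  rewrite cl_a (_ : a = 0 + 1) ?(closed_curve_periodic hc); [exact: inner_arc0 | lra].
- have [b_lt1|b_ge1] := ltP b 1.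
    by exfalso; apply: no_exit_b; split => //; exact: exit_is_q (stop_b b_lt1) cl_b.
  by rewrite cl_b (_ : 1 - b = 0); [exact: inner_arc0 | lra].
Qed.

Lemma exit_at_q p : closest C x p -> g i0 s0 = p ->
  (a < 1 /\ h a = q) \/ (b < 1 /\ h (1 - b) = q).
Proof.
move=> xp p_eq; apply: contrapT => /not_orP[no_exit_a no_exit_b].
suff : inner_arc q by move/inner_arc_in_ball; rewrite ltxx.
rewrite -(seg_cl1 qC seg_off_medial).
apply: (real_induction01 (P := fun t => inner_arc (cl t))).
- by rewrite (seg_cl0 seg_off_medial xp) -p_eq -[s0]addr0; exact: inner_arc0.
- move=> t t01 /inner_arc_open [r r0 near_r].
  have [eta eta0 near_eta] := seg_cl_continuous gc seg_off_medial t01 r0.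
  exists eta => // t' t'01 tt'; apply: near_r; last exact: near_eta.
  exact: (seg_cl_in_C seg_off_medial t'01).
- by move=> t; exact: seg_cl_inner_arc_closed.
Qed.

End Sweep.

Theorem lemma3p3 (R : realType) (d n : nat) (g : 'I_n -> R -> 'rV[R]_d)
    (x q p : 'rV[R]_d) :
  (2 <= d)%N ->
  (forall i, closed_curve (g i)) ->
  (forall i j, i != j -> forall s t, g i s <> g j t) ->
  curves_union g q ->
  (forall y, cseg x q y -> ~ medial_axis (curves_union g) y) ->
  closest (curves_union g) x p ->
  exists i : 'I_n,
    [/\ curve_img (g i) p, curve_img (g i) q &
      (arc_co (g i) p q `<=` ball_int x (euclid_dist x q) \/
       arc_oc (g i) q p `<=` ball_int x (euclid_dist x q))].
Proof.
(* The argument does not use [2 <= d]. *)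
move=> _ gc g_disj qC seg_off_medial xp.
have [i0 [t pt]] := xp.1; have [s0 [s01 p_eq _]] := closed_curve_rep (gc i0) t.
rewrite -pt in p_eq; exists i0.
have [pq|/eqP p_neq_q] := eqVneq p q.
  split; [by exists s0 | by rewrite -pq; exists s0 | left].
  by rewrite -pq -p_eq arc_co_self.
pose F u := euclid_dist x (g i0 (s0 + u)).
have Fc : continuous F :=
  continuous_euclid_dist x (closed_curve_cont (closed_curve_shift (gc i0) s0)).
have pD := closest_in_ball qC seg_off_medial xp p_neq_q.
have F0 : F 0 < euclid_dist x q by rewrite /F addr0 p_eq.
have F1 : F 1 < euclid_dist x q by rewrite /F (closed_curve_periodic (gc i0)) p_eq.
have [a [a_range before_a stop_a]] := first_exit Fc F0.
have [b [b_range before_b stop_b]] := last_entry Fc F1.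
case: (exit_at_q gc g_disj a_range b_range before_a before_b stop_a stop_b qC
  seg_off_medial xp p_eq) => [[a_lt1 qa]|[b_lt1 qb]].
- split; [by exists s0 | by exists (s0 + a) | left].
  apply: (arc_co_sub (gc i0) s01 _ p_eq qa) => [|v va]; first by apply/andP; lra.
  exact: before_a.
- split; [by exists s0 | by exists (s0 + (1 - b)) | right].
  apply: (arc_oc_sub (gc i0) s01 _ qb p_eq) => [|v vb]; first by apply/andP; lra.
  by rewrite -(subKr 1 v); apply: before_b; apply/andP; lra.
Qed.
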